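(* Let $m=2k+1\ge3$ be odd, and write the Chebyshev polynomial of degree $m$ as $T_m(x)=\sum_{i=0}^{k}c_{2i+1}x^{2i+1}$. Let $s=\max\{v_2(m+1),v_2(m-1)\}$. Then $v_2(c_3)=s$ and $v_2(c_{2i+1})\ge s+1$ for all $1<i\le k$.
   Context: $v_2$ denotes the $2$-adic valuation. For an integer $m\ge0$, the $m$-th Chebyshev polynomial is $$T_m(x)=\sum_{k=0}^{\lfloor m/2\rfloor}(-1)^k\frac{m}{m-k}\binom{m-k}{k}2^{m-2k-1}x^{m-2k}.$$ For odd $m$ it contains only odd powers of $x$. *)

From mathcomp Require Import all_boot all_order all_algebra.
Set Implicit Arguments. Unset Strict Implicit. Unset Printing Implicit Defensive.
Import GRing.Theory Num.Theory.
Local Open Scope ring_scope.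

(* The rational m/(m-j) * C(m-j,j) is an integer (for m >= 1), so it is
   computed as the exact natural-number quotient (m * C(m-j,j)) %/ (m-j). *)
Definition chebT (m : nat) : {poly int} :=
  \sum_(j < (m./2).+1)
     (((-1) ^+ j * ((m * 'C(m - j, j)) %/ (m - j) * 2 ^ (m - 2 * j).-1)%N%:Z)%:P
      * 'X^(m - 2 * j)).

Definition cheb_coef (m d : nat) : int := (chebT m)`_d.

Definition v2 (z : int) : nat := logn 2 `|z|%N.

From mathcomp Require Import all_boot all_order all_algebra zify.
Set Implicit Arguments. Unset Strict Implicit. Unset Printing Implicit Defensive.
Import GRing.Theory Num.Theory.

(* With m = 2k+1 and j = k-i, the coefficient of x^(2i+1) in T_m is
   ±N 2^(2i) where (2i+1) N = m C(k+i, 2i); since m and 2i+1 are odd,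
   v2(c_(2i+1)) = 2i + v2 C(k+i, 2i).  For i = 1, C(k+1, 2) = k(k+1)/2 gives
   v2(c_3) = v2(k(k+1)) + 1 = s.  For i >= 2, C(k+i, 2i) (2i)! is a product of
   2i consecutive integers containing (k+2)(k+1)k(k-1), whose valuation is at
   least v2(k(k+1)) + 1, while v2((2i)!) < 2i (Legendre). *)

Lemma logn2_odd u : odd u -> logn 2 u = 0.
Proof. by move=> u_odd; apply: logn_coprime; rewrite coprime2n. Qed.

Lemma logn2_double n : 0 < n -> logn 2 (2 * n) = (logn 2 n).+1.
Proof. by move=> n_gt0; rewrite lognM // (pfactorK 1). Qed.

Lemma logn2_mulS n : logn 2 (n * n.+1) = maxn (logn 2 n) (logn 2 n.+1).
Proof.
case: n => [|n]; first by rewrite mul0n logn0 logn1.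
rewrite lognM //; have [n_odd | n_even] := boolP (odd n.+1).
  by rewrite (logn2_odd n_odd) add0n max0n.
by rewrite (@logn2_odd n.+2) ?addn0 ?maxn0 //; move: n_even; rewrite /= !negbK.
Qed.

Lemma maxn_logn2_succ_pred k : 0 < k ->
  maxn (logn 2 (2 * k + 1).+1) (logn 2 (2 * k + 1).-1) = (logn 2 (k * k.+1)).+1.
Proof.
move=> k_gt0; have -> : (2 * k + 1).+1 = 2 * k.+1 by lia.
by rewrite addn1 /= !logn2_double // maxnSS maxnC logn2_mulS.
Qed.

Lemma logn2_fact_double n : logn 2 (2 * n)`! = n + logn 2 n`!.
Proof.
elim: n => [|n IHn] //; have -> : 2 * n.+1 = (2 * n).+2 by lia.
rewrite !factS !lognM ?muln_gt0 ?fact_gt0 // IHn (@logn2_odd (2 * n).+1) /= ?oddM //.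
have -> : (2 * n).+2 = 2 * n.+1 by lia.
by rewrite logn2_double //; lia.
Qed.

Lemma logn2_fact_lt n : 0 < n -> logn 2 n`! < n.
Proof.
elim/ltn_ind: n => n IHn n_gt0.
have := odd_double_half n; rewrite -mul2n; set q := n./2; clearbody q => n_eq.
have [q0 | q_gt0] := posnP q.
  by move: n_gt0; rewrite -n_eq q0; case: (odd n).
have {IHn}IHq : logn 2 q`! < q by apply: IHn; lia.
move: n_eq; case: (odd n) => /= <-.
- rewrite add1n factS lognM ?fact_gt0 // logn2_odd /= ?oddM // logn2_fact_double; lia.
- by rewrite add0n logn2_fact_double; lia.
Qed.

Lemma ffactD n a b : n ^_ (a + b) = n ^_ a * (n - a) ^_ b.
Proof.
elim: b => [|b IHb]; first by rewrite addn0 ffactn0 muln1.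
by rewrite addnS !ffactnSr IHb subnDA mulnA.
Qed.

Lemma dvdn_ffact_shift n a b c : n ^_ b %| (a + n) ^_ (a + b + c).
Proof. by rewrite -addnA !ffactD addKn dvdn_mull // dvdn_mulr. Qed.

Lemma logn2_ffact4 k : 1 < k -> (logn 2 (k * k.+1)).+1 <= logn 2 (k.+2 ^_ 4).
Proof.
case: k => [|[|k]] // _; rewrite !ffactnS ffactn0 /= muln1.
have -> : k.+4 * (k.+3 * (k.+2 * k.+1)) = (k.+2 * k.+3) * (k.+4 * k.+1) by lia.
rewrite [X in _ < X]lognM ?muln_gt0 // -[X in X < _]addn0 ltn_add2l.
by rewrite -(pfactor_dvdn 1) // dvdn2 oddM /=; case: (odd k).
Qed.

Lemma logn2_bin2 k : 0 < k -> logn 2 (k * k.+1) = (logn 2 'C(k.+1, 2)).+1.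
Proof.
move=> k_gt0; have := mul_bin_diag k.+1 1; rewrite /= bin1 => bin2_double.
by rewrite mulnC bin2_double logn2_double // bin_gt0.
Qed.

Lemma logn2_bin_lower k i : 1 < i <= k ->
  (logn 2 (k * k.+1)).+2 <= 2 * i + logn 2 'C(k + i, 2 * i).
Proof.
case/andP=> lt1i le_ik.
have ffact_gt0 : 0 < (k + i) ^_ (2 * i) by rewrite ffact_gt0; lia.
have logn_ffact : logn 2 'C(k + i, 2 * i) + logn 2 (2 * i)`! = logn 2 ((k + i) ^_ (2 * i)).
  by rewrite -lognM ?fact_gt0 ?bin_gt0 ?bin_ffact //; lia.
have ffact4_dvd : k.+2 ^_ 4 %| (k + i) ^_ (2 * i).
  have -> : k + i = i - 2 + k.+2 by lia.
  have -> : 2 * i = i - 2 + 4 + (i - 2) by lia.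
  exact: dvdn_ffact_shift.
have le_ffact4 := dvdn_leq_log 2 ffact_gt0 ffact4_dvd.
have lt_ffact4 : (logn 2 (k * k.+1)).+1 <= logn 2 (k.+2 ^_ 4) by apply: logn2_ffact4; lia.
have lt_fact : logn 2 (2 * i)`! < 2 * i by apply: logn2_fact_lt; lia.
lia.
Qed.

Lemma dvdz_pow2 (z : int) e : z != 0 -> e <= v2 z -> ((2 ^ e)%N %| z)%Z.
Proof. by move=> z_neq0 le_e; rewrite dvdzE /= pfactor_dvdn ?absz_gt0. Qed.

Definition cheb_mag (m j : nat) : nat := (m * 'C(m - j, j)) %/ (m - j).

Lemma cheb_coefE m j : j <= m./2 ->
  cheb_coef m (m - 2 * j) = ((-1) ^+ j * (cheb_mag m j * 2 ^ (m - 2 * j).-1)%N%:Z)%R.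
Proof.
move=> le_j_half; have le_half : 2 * m./2 <= m.
  by rewrite -{2}(odd_double_half m) mul2n leq_addl.
rewrite /cheb_coef /chebT coef_sum (bigD1 (Ordinal (le_j_half : j < m./2.+1))) //=.
rewrite coefCM coefXn eqxx mulr1 big1 ?addr0 // => j' ne_j'j.
rewrite coefCM coefXn; case: eqP => [eq_exp | _]; last by rewrite mulr0.
by case/eqP: ne_j'j; apply: val_inj => /=; have := ltn_ord j'; lia.
Qed.

(* m C(n, j) = n C(n, j) + j C(n, j) and j C(n, j) = n C(n - 1, j - 1), for n = m - j. *)
Lemma dvdn_cheb_mag m j : j <= m -> (m - j) %| m * 'C(m - j, j).
Proof.
case: j => [_ | j le_jm]; first by rewrite subn0 bin0 muln1.
have -> : m * 'C(m - j.+1, j.+1) = (m - j.+1) * 'C(m - j.+1, j.+1) + j.+1 * 'C(m - j.+1, j.+1).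
  by rewrite -mulnDl subnK.
by rewrite -mul_bin_diag dvdn_add ?dvdn_mulr.
Qed.

Lemma cheb_mag_odd k i : i <= k ->
  (2 * i + 1) * cheb_mag (2 * k + 1) (k - i) = (2 * k + 1) * 'C(k + i, 2 * i).
Proof.
move=> le_ik; rewrite /cheb_mag; set d := 2 * k + 1 - (k - i).
have magK : (2 * k + 1) * 'C(d, k - i) %/ d * d = (2 * k + 1) * 'C(d, k - i).
  by apply: divnK; apply: dvdn_cheb_mag; lia.
have d_eq : d = (k + i).+1 by rewrite /d; lia.
have binK : (2 * i + 1) * 'C(d, k - i) = d * 'C(k + i, 2 * i).
  rewrite -bin_sub; last by rewrite d_eq; lia.
  by rewrite d_eq mul_bin_diag addn1; congr (_ * 'C(_, _)); lia.
apply/eqP; rewrite -(eqn_pmul2l (_ : 0 < d)); last by rewrite d_eq.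
by rewrite mulnCA [d * _]mulnC magK mulnCA binK mulnCA.
Qed.

Lemma cheb_mag_odd_gt0 k i : i <= k -> 0 < cheb_mag (2 * k + 1) (k - i).
Proof.
move=> le_ik; have : 0 < (2 * i + 1) * cheb_mag (2 * k + 1) (k - i).
  by rewrite cheb_mag_odd // muln_gt0 addn1 /= bin_gt0; lia.
by rewrite muln_gt0 => /andP[].
Qed.

Lemma cheb_coef_odd k i : i <= k ->
  cheb_coef (2 * k + 1) (2 * i + 1) =
  ((-1) ^+ (k - i) * (cheb_mag (2 * k + 1) (k - i) * 2 ^ (2 * i))%N%:Z)%R.
Proof.
move=> le_ik; have half_m : (2 * k + 1)./2 = k.
  by rewrite addnC mul2n (half_bit_double _ true).
have -> : 2 * i + 1 = 2 * k + 1 - 2 * (k - i) by lia.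
rewrite cheb_coefE ?half_m ?leq_subr //.
by have -> : (2 * k + 1 - 2 * (k - i)).-1 = 2 * i by lia.
Qed.

Lemma cheb_coef_odd_neq0 k i : i <= k -> cheb_coef (2 * k + 1) (2 * i + 1) != 0%R.
Proof.
move=> le_ik; rewrite cheb_coef_odd // mulf_eq0 signr_eq0 /= -lt0n.
by rewrite muln_gt0 expn_gt0 cheb_mag_odd_gt0.
Qed.

Lemma v2_cheb_coef_odd k i : i <= k ->
  v2 (cheb_coef (2 * k + 1) (2 * i + 1)) = 2 * i + logn 2 'C(k + i, 2 * i).
Proof.
move=> le_ik; have coprime2_odd n : coprime 2 (2 * n + 1).
  by rewrite coprime2n addn1 /= oddM.
rewrite cheb_coef_odd // /v2 abszMsign lognM ?cheb_mag_odd_gt0 ?expn_gt0 //.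
by rewrite pfactorK // addnC -(logn_Gauss _ (coprime2_odd i)) cheb_mag_odd ?logn_Gauss.
Qed.

Theorem lemma3p1 (k : nat) (hk : (1 <= k)%N) :
  let m := (2 * k + 1)%N in
  let s := maxn (logn 2 m.+1) (logn 2 m.-1) in
  cheb_coef m 3 != 0 /\ v2 (cheb_coef m 3) = s /\
  (forall i : nat, (1 < i <= k)%N ->
     ((2 ^ s.+1)%N %| cheb_coef m (2 * i + 1))%Z).
Proof.
move=> m s; have s_eq : s = (logn 2 (k * k.+1)).+1 by exact: maxn_logn2_succ_pred.
split; [|split].
- exact: (cheb_coef_odd_neq0 hk).
- by rewrite /m -[3]/(2 * 1 + 1) (v2_cheb_coef_odd hk) s_eq logn2_bin2 // addn1.
- move=> i /andP[lt1i le_ik]; apply: dvdz_pow2; first exact: cheb_coef_odd_neq0.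
  by rewrite v2_cheb_coef_odd // s_eq logn2_bin_lower ?lt1i.
Qed.
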